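(* Let $K$ be a division ring and $M,N\ge2$ integers. Suppose that for every group $\Gamma=\Gamma_\pi\in\bigcup_{2\le m\le M,\ 2\le n\le N}\mathrm{ULIE}^{(2)}_K(m,n)$, with its canonical generators $1=a_0,a_1,\dots,a_{m-1}$ and $1=b_0,b_1,\dots,b_{n-1}$ and with $\phi:\Gamma\to\Gamma/N_{\mathrm{tor}}(\Gamma)$ the quotient map, we have $\phi(a_i)=\phi(a_{i'})$ for some $0\le i<i'\le m-1$ or $\phi(b_j)=\phi(b_{j'})$ for some $0\le j<j'\le n-1$. Then for every torsion-free group $G$ there are no $a,b\in K[G]$ with $\operatorname{rank}(a)=M$, $\operatorname{rank}(b)=N$ and $ab=1$.
   Context: $K$ is a nonzero division ring, $K[G]$ the group ring, rank = number of group elements with nonzero coefficient. For $m,n\ge2$ and a partition $\pi$ of $S_{m,n}=\{0,\dots,m-1\}\times\{0,\dots,n-1\}$, $(i,j)\sim_\pi(i',j')$ means same block; $\Gamma_\pi$ is the group with canonical generators $a_0,\dots,a_{m-1},b_0,\dots,b_{n-1}$ and relations $a_0=b_0=1$, $a_ib_j=a_{i'}b_{j'}$ whenever $(i,j)\sim_\pi(i',j')$. $\pi$ is nondegenerate if in $\Gamma_\pi$ the $a_i$ are pairwise distinct and the $b_j$ pairwise distinct. $\pi$ is realizable with nonzero $r_0,\dots,s_{n-1}\in K$ if for each block $E$, $\sum_{(i,j)\in E}r_is_j$ equals $1$ if $(0,0)\in E$, else $0$; ordering partitions by refinement, $\pi$ is minimally realizable over $K$ if for some choice of nonzero elements of $K$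 it is minimal among partitions realizable with them. An invariant subgrid of $\pi$ is $(R,C)$ with $0\in R\subseteq\{0,\dots,m-1\}$, $0\in C\subseteq\{0,\dots,n-1\}$, $|R|,|C|\ge2$, such that $(i,j)\in R\times C$ and $(i,j)\sim_\pi(i',j')$ imply $(i',j')\in R\times C$; it is proper if $|R|<m$ or $|C|<n$. $\mathrm{ULIE}^{(2)}_K(m,n)$ is the set of $\Gamma_\pi$ with $\pi$ nondegenerate, minimally realizable over $K$, and without proper invariant subgrids. For a group $\Gamma$, $N^{(1)}_{\mathrm{tor}}(\Gamma)$ is the smallest normal subgroup containing all elements of finite order; $N_{\mathrm{tor},1}=N^{(1)}_{\mathrm{tor}}(\Gamma)$, $N_{\mathrm{tor},k+1}=\phi_k^{-1}(N^{(1)}_{\mathrm{tor}}(\Gamma/N_{\mathrm{tor},k}))$ with $\phi_k$ the quotient map $\Gamma\to\Gamma/N_{\mathrm{tor},k}$, and $N_{\mathrm{tor}}(\Gamma)=\bigcup_kN_{\mathrm{tor},k}$. *)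

From HB Require Import structures.
From mathcomp Require Import all_boot all_order all_algebra.
From Stdlib Require List.
Set Implicit Arguments. Unset Strict Implicit. Unset Printing Implicit Defensive.
Import GRing.Theory.
Local Open Scope ring_scope.

Record group := Group {
  gcar :> Type;
  gmul : gcar -> gcar -> gcar;
  gone : gcar;
  ginv : gcar -> gcar;
  gmulA : forall x y z, gmul x (gmul y z) = gmul (gmul x y) z;
  gmul1g : forall x, gmul gone x = x;
  gmulVg : forall x, gmul (ginv x) x = gone }.
Arguments gmul {g}. Arguments gone {g}. Arguments ginv {g}.

Fixpoint gpow (G : group) (x : G) (n : nat) : G :=
  match n with 0 => gone | k.+1 => gmul x (gpow x k) end.

Definition torsion_free (G : group) : Prop :=
  forall (x : G) (n : nat), (0 < n)%N -> gpow x n = gone -> x = gone.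

Definition group_hom (G H : group) (f : G -> H) : Prop :=
  forall x y, f (gmul x y) = gmul (f x) (f y).

Definition normal_subgroup (G : group) (P : G -> Prop) : Prop :=
  [/\ P gone, (forall x y, P x -> P y -> P (gmul x y)),
      (forall x, P x -> P (ginv x)) &
      (forall x g, P x -> P (gmul (ginv g) (gmul x g)))].

Definition normal_closure (G : group) (S : G -> Prop) (x : G) : Prop :=
  forall P, normal_subgroup P -> (forall y, S y -> P y) -> P x.

(** N_{tor,k}: N_{tor,0} = 1 ; N_{tor,k+1} = preimage of N^{(1)}_tor(G/N_{tor,k}),
    i.e. the normal closure of the x whose image in G/N_{tor,k} has finite
    order, i.e. with x^n in N_{tor,k} for some n >= 1. *)
Fixpoint Ntor_k (G : group) (k : nat) : G -> Prop :=
  match k with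
  | 0 => fun x => x = gone
  | k'.+1 => normal_closure (fun x => exists n, (0 < n)%N /\ Ntor_k k' (gpow x n))
  end.

Definition Ntor (G : group) (x : G) : Prop := exists k, Ntor_k k x.

Definition is_partition (m n : nat) (P : {set {set 'I_m * 'I_n}}) : bool :=
  partition P [set: 'I_m * 'I_n].

Definition same_block (m n : nat) (P : {set {set 'I_m * 'I_n}}) (x y : 'I_m * 'I_n) : bool :=
  [exists E in P, (x \in E) && (y \in E)].

Definition pi_relations (H : group) (m n : nat) (P : {set {set 'I_m * 'I_n}})
    (a : 'I_m -> H) (b : 'I_n -> H) : Prop :=
  [/\ (forall i : 'I_m, val i = 0%N -> a i = gone),
      (forall j : 'I_n, val j = 0%N -> b j = gone) &
      (forall x y, same_block P x y -> gmul (a x.1) (b x.2) = gmul (a y.1) (b y.2))].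

(** (Gamma, a, b) is the group Gamma_pi with its canonical generators
    (universal property of the presentation) *)
Definition presents (Γ : group) (m n : nat) (P : {set {set 'I_m * 'I_n}})
    (a : 'I_m -> Γ) (b : 'I_n -> Γ) : Prop :=
  pi_relations P a b /\
  forall (H : group) (a' : 'I_m -> H) (b' : 'I_n -> H), pi_relations P a' b' ->
    exists f : Γ -> H,
      [/\ group_hom f, (forall i, f (a i) = a' i), (forall j, f (b j) = b' j) &
          forall g : Γ -> H, group_hom g -> (forall i, g (a i) = a' i) ->
            (forall j, g (b j) = b' j) -> forall x, g x = f x].

Definition nondegenerate_gens (Γ : group) (m n : nat) (a : 'I_m -> Γ) (b : 'I_n -> Γ) : Prop :=
  injective a /\ injective b.

Definition is_origin (m n : nat) (x : 'I_m * 'I_n) : bool :=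
  (val x.1 == 0%N) && (val x.2 == 0%N).

Definition realizable_with (K : unitRingType) (m n : nat) (P : {set {set 'I_m * 'I_n}})
    (r : 'I_m -> K) (s : 'I_n -> K) : Prop :=
  forall E, E \in P ->
    \sum_(x in E) r x.1 * s x.2 = (if [exists x in E, is_origin x] then 1 else 0).

Definition refines (m n : nat) (Q P : {set {set 'I_m * 'I_n}}) : bool :=
  [forall E in Q, [exists F in P, E \subset F]].

Definition minimally_realizable (K : unitRingType) (m n : nat) (P : {set {set 'I_m * 'I_n}}) : Prop :=
  exists (r : 'I_m -> K) (s : 'I_n -> K),
    [/\ (forall i, r i != 0), (forall j, s j != 0), realizable_with P r s &
        forall Q, is_partition Q -> realizable_with Q r s -> refines Q P -> Q = P].

Definition invariant_subgrid (m n : nat) (P : {set {set 'I_m * 'I_n}})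
    (R : {set 'I_m}) (C : {set 'I_n}) : Prop :=
  [/\ [exists i in R, val i == 0%N], [exists j in C, val j == 0%N],
      (2 <= #|R|)%N, (2 <= #|C|)%N &
      forall x y, x \in setX R C -> same_block P x y -> y \in setX R C].

Definition no_proper_invariant_subgrid (m n : nat) (P : {set {set 'I_m * 'I_n}}) : Prop :=
  forall R C, invariant_subgrid P R C -> ~ ((#|R| < m)%N \/ (#|C| < n)%N).

(** phi(a_i) = phi(a_i') for some i < i', or phi(b_j) = phi(b_j') for some j < j',
    phi : Gamma -> Gamma / N_tor(Gamma) *)
Definition gens_collapse_mod_Ntor (Γ : group) (m n : nat) (a : 'I_m -> Γ) (b : 'I_n -> Γ) : Prop :=
  (exists i i' : 'I_m, (i < i')%N /\ Ntor (gmul (ginv (a i)) (a i'))) \/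
  (exists j j' : 'I_n, (j < j')%N /\ Ntor (gmul (ginv (b j)) (b j'))).

(** * Group ring K[G]: an element is a function f : G -> K whose support is
    exactly the duplicate-free list s; its rank is size s. *)
Definition gr_elem (G : group) (K : unitRingType) (f : G -> K) (s : seq G) : Prop :=
  List.NoDup s /\ forall g, f g != 0 <-> List.In g s.

Definition gr_prod_is_one (G : group) (K : unitRingType) (fa : G -> K) (sa : seq G)
    (fb : G -> K) : Prop :=
  let c := fun x : G => \sum_(h <- sa) fa h * fb (gmul (ginv h) x) in
  c gone = 1 /\ forall x, x <> gone -> c x = 0.

From Pilot Require Import Defs.
From HB Require Import structures.
From mathcomp Require Import all_boot all_order all_algebra.
From mathcomp Require Import perm zify.
From Stdlib Require Import Classical ClassicalEpsilon ProofIrrelevance.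
From Stdlib Require Import FunctionalExtensionality PropExtensionality.
Set Implicit Arguments. Unset Strict Implicit. Unset Printing Implicit Defensive.
Import GRing.Theory.
Local Open Scope ring_scope.

(* Suppose [a b = 1] in [K[G]], [G] torsion-free, with [a = \sum_i r_i g_i] of rank [M] and
   [b = \sum_j s_j h_j] of rank [N]; translating, [g_0 h_0 = 1]. Grouping the pairs [(i, j)]
   by the value [g_i h_j] gives a partition of the grid realizable with the coefficients;
   let [π] be a finest realizable refinement of it. Then [a_i |-> g_i h_0],
   [b_j |-> h_0^-1 h_j] defines a homomorphism [Γ_π -> G]: it shows that [π] is
   nondegenerate, and as [G] is torsion-free it kills [N_tor(Γ_π)], so the generators do not
   collapse modulo [N_tor]. A proper invariant subgrid of [π] would carve out a solution of
   [a' b' = 1] of smaller ranks, so by induction on [M + N] there is none. Hence [Γ_π] lies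
   in [ULIE], contradicting the hypothesis. *)

Section GroupLemmas.
Variable G : group.
Implicit Types x y z : G.

Lemma gmulV x : gmul x (ginv x) = gone.
Proof.
rewrite -[gmul x _]gmul1g -(gmulVg (ginv x)) -gmulA (gmulA (ginv x)).
by rewrite gmulVg gmul1g gmulVg.
Qed.

Lemma gmul1 x : gmul x gone = x.
Proof. by rewrite -(gmulVg x) gmulA gmulV gmul1g. Qed.

Lemma gmulI x y z : gmul x y = gmul x z -> y = z.
Proof. by move=> e; rewrite -[y]gmul1g -(gmulVg x) -gmulA e gmulA gmulVg gmul1g. Qed.

Lemma gmulIr x y z : gmul y x = gmul z x -> y = z.
Proof. by move=> e; rewrite -[y]gmul1 -(gmulV x) gmulA e -gmulA gmulV gmul1. Qed.

Lemma ginv_unique x y : gmul y x = gone -> y = ginv x.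
Proof. by move=> e; apply: (gmulIr (x := x)); rewrite e gmulVg. Qed.

Lemma gmulVg_eq1 x y : gmul (ginv x) y = gone -> y = x.
Proof. by rewrite -(gmulVg x) => /gmulI. Qed.

Lemma ginvK x : ginv (ginv x) = x.
Proof. by symmetry; apply: ginv_unique; rewrite gmulV. Qed.

Lemma ginv1 : ginv gone = gone :> G.
Proof. by symmetry; apply: ginv_unique; rewrite gmul1. Qed.

Lemma ginvM x y : ginv (gmul x y) = gmul (ginv y) (ginv x).
Proof.
symmetry; apply: ginv_unique.
by rewrite -gmulA (gmulA (ginv x)) gmulVg gmul1g gmulVg.
Qed.

End GroupLemmas.

Section Homomorphisms.
Variables (G H : group) (f : G -> H).
Hypothesis f_hom : group_hom f.

Lemma hom1 : f gone = gone.
Proof. by apply: (@gmulI _ (f gone)); rewrite -f_hom !gmul1. Qed.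

Lemma homV x : f (ginv x) = ginv (f x).
Proof. by apply: ginv_unique; rewrite -f_hom gmulVg hom1. Qed.

Lemma hom_pow x k : f (gpow x k) = gpow (f x) k.
Proof. by elim: k => [|k IHk] /=; rewrite ?hom1 // f_hom IHk. Qed.

Hypothesis H_torsion_free : torsion_free H.

Lemma hom_Ntor_k k x : Ntor_k k x -> f x = gone.
Proof.
elim: k x => [|k IHk] x /=; first by move->; apply: hom1.
move/(_ (fun y => f y = gone)); apply; last first.
  by move=> y [p [p_gt0 /IHk]]; rewrite hom_pow; apply: H_torsion_free.
split=> [|y z fy fz|y fy|y u fy]; rewrite ?hom1 ?f_hom ?homV ?fy ?fz ?gmul1 ?ginv1 //.
by rewrite gmul1g gmulVg.
Qed.

Lemma hom_Ntor_eq x y : Ntor (gmul (ginv x) y) -> f y = f x.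
Proof. by case=> k /hom_Ntor_k; rewrite f_hom homV; apply: gmulVg_eq1. Qed.

End Homomorphisms.

Section Words.
Variables (m n : nat) (H : group) (a : 'I_m -> H) (b : 'I_n -> H).

(* The boolean of a letter marks an inverted generator. *)
Definition word := seq (('I_m + 'I_n) * bool).

Definition eval_gen (x : 'I_m + 'I_n) : H :=
  match x with inl i => a i | inr j => b j end.

Definition eval_letter (l : ('I_m + 'I_n) * bool) : H :=
  if l.2 then ginv (eval_gen l.1) else eval_gen l.1.

Definition eval_word (w : word) : H := foldr (fun l v => gmul (eval_letter l) v) gone w.

Definition inv_word (w : word) : word := rev [seq (l.1, ~~ l.2) | l <- w].

Lemma eval_word_cat u v : eval_word (u ++ v) = gmul (eval_word u) (eval_word v).
Proof. by elim: u => [|l u IHu] /=; rewrite ?gmul1g // IHu gmulA. Qed.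

Lemma eval_word_inv w : eval_word (inv_word w) = ginv (eval_word w).
Proof.
elim: w => [|[x []] w IHw]; first by rewrite ginv1.
all: rewrite /inv_word map_cons rev_cons -cats1 eval_word_cat -/(inv_word w) IHw.
all: by rewrite /= /eval_letter /= gmul1 ginvM ?ginvK.
Qed.

End Words.

Lemma eval_word_hom (G H : group) (f : G -> H) m n (a : 'I_m -> G) (b : 'I_n -> G)
    (a' : 'I_m -> H) (b' : 'I_n -> H) (w : word m n) :
  group_hom f -> (forall i, f (a i) = a' i) -> (forall j, f (b j) = b' j) ->
  f (eval_word a b w) = eval_word a' b' w.
Proof.
move=> f_hom fa fb; elim: w => [|[[i|j] []] w IHw] /=; first exact: hom1.
all: by rewrite f_hom IHw /eval_letter /= ?homV ?fa ?fb.
Qed.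

Section PresentedGroup.
Variables (m n : nat) (P : {set {set 'I_m * 'I_n}}).

(* [Γ_π] is built as the quotient of the words by the relation "equal in every group
   generated by elements satisfying the relations of [π]"; an element is the equivalence
   class itself, seen as a predicate on words. *)
Definition word_eq (u v : word m n) : Prop :=
  forall (H : group) (a : 'I_m -> H) (b : 'I_n -> H),
    pi_relations P a b -> eval_word a b u = eval_word a b v.

Definition pi_elem := {c : word m n -> Prop | exists w, c = word_eq w}.

Definition pi_class (w : word m n) : pi_elem := exist _ (word_eq w) (ex_intro _ w erefl).

Definition pi_repr (c : pi_elem) : word m n :=
  proj1_sig (constructive_indefinite_description _ (proj2_sig c)).

Lemma pi_reprK c : pi_class (pi_repr c) = c.
Proof.
rewrite /pi_repr; case: constructive_indefinite_description => w /= cw.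
by case: c cw => c pc /= cw; subst c; congr exist; apply: proof_irrelevance.
Qed.

Lemma pi_class_eq u v : word_eq u v -> pi_class u = pi_class v.
Proof.
move=> uv; rewrite /pi_class.
have e : word_eq u = word_eq v.
  apply: functional_extensionality => w; apply: propositional_extensionality.
  by split=> uw H a b rel; rewrite -uw ?uv.
by move: (ex_intro _ u _); rewrite e => p; congr exist; apply: proof_irrelevance.
Qed.

Lemma eval_pi_repr w (H : group) a b :
  pi_relations P a b -> @eval_word m n H a b (pi_repr (pi_class w)) = eval_word a b w.
Proof.
have /(f_equal (@proj1_sig _ _)) /= eq_cls := pi_reprK (pi_class w).
have repr_eq : word_eq (pi_repr (pi_class w)) w by rewrite eq_cls.
exact: repr_eq.
Qed.

Definition pi_mul (c d : pi_elem) := pi_class (pi_repr c ++ pi_repr d).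
Definition pi_one := pi_class [::].
Definition pi_inv (c : pi_elem) := pi_class (inv_word (pi_repr c)).

Lemma pi_mulA : forall c d e, pi_mul c (pi_mul d e) = pi_mul (pi_mul c d) e.
Proof.
move=> c d e; apply: pi_class_eq => H a b rel.
by rewrite !eval_word_cat !eval_pi_repr // !eval_word_cat gmulA.
Qed.

Lemma pi_mul1g : forall c, pi_mul pi_one c = c.
Proof.
move=> c; rewrite -[RHS]pi_reprK; apply: pi_class_eq => H a b rel.
by rewrite eval_word_cat eval_pi_repr //= gmul1g.
Qed.

Lemma pi_mulVg : forall c, pi_mul (pi_inv c) c = pi_one.
Proof.
move=> c; apply: pi_class_eq => H a b rel.
by rewrite eval_word_cat eval_pi_repr // eval_word_inv gmulVg.
Qed.

Definition pi_group : group := @Defs.Group pi_elem pi_mul pi_one pi_inv pi_mulA pi_mul1g pi_mulVg.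

Definition pi_a (i : 'I_m) : pi_group := pi_class [:: (inl i, false)].
Definition pi_b (j : 'I_n) : pi_group := pi_class [:: (inr j, false)].

Lemma pi_relations_gens : pi_relations P pi_a pi_b.
Proof.
split=> [i i0|j j0|x y xy]; apply: pi_class_eq => H a b [a0 b0 ab] /=.
- by rewrite /eval_letter /= gmul1 a0.
- by rewrite /eval_letter /= gmul1 b0.
- by rewrite !eval_word_cat !eval_pi_repr //= /eval_letter /= !gmul1 (ab x y).
Qed.

Lemma eval_word_pi_gens w : eval_word pi_a pi_b w = pi_class w.
Proof.
elim: w => [|l w IHw] //=; rewrite IHw.
have -> : eval_letter pi_a pi_b l = pi_class [:: l].
  case: l => [[i|j] []] //; apply: pi_class_eq => H a b rel /=;
    by rewrite eval_word_inv eval_pi_repr //= /eval_letter /= !gmul1.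
by apply: pi_class_eq => H a b rel; rewrite eval_word_cat !eval_pi_repr //= gmul1.
Qed.

Section Lift.
Variables (H : group) (a : 'I_m -> H) (b : 'I_n -> H).
Hypothesis rel : pi_relations P a b.

Definition pi_lift (c : pi_group) : H := eval_word a b (pi_repr c).

Lemma pi_lift_hom : group_hom pi_lift.
Proof. by move=> c d; rewrite /pi_lift /= eval_pi_repr // eval_word_cat. Qed.

Lemma pi_lift_a i : pi_lift (pi_a i) = a i.
Proof. by rewrite /pi_lift eval_pi_repr //= /eval_letter /= gmul1. Qed.

Lemma pi_lift_b j : pi_lift (pi_b j) = b j.
Proof. by rewrite /pi_lift eval_pi_repr //= /eval_letter /= gmul1. Qed.

End Lift.

Lemma presents_pi_group : presents P pi_a pi_b.
Proof.
split=> [|H a b rel]; first exact: pi_relations_gens.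
exists (pi_lift a b); split; [exact: pi_lift_hom|exact: pi_lift_a|exact: pi_lift_b|].
move=> f f_hom fa fb c; rewrite -(pi_reprK c) -eval_word_pi_gens.
by rewrite (eval_word_hom _ f_hom fa fb) eval_word_pi_gens /pi_lift eval_pi_repr.
Qed.

End PresentedGroup.

Section GridPartitions.
Variables m n : nat.
Implicit Types (P Q : {set {set 'I_m * 'I_n}}) (x y o : 'I_m * 'I_n).

Lemma same_blockE P x y : is_partition P -> same_block P x y = (y \in pblock P x).
Proof.
case/and3P=> /eqP cover_P triv_P _.
apply/existsP/idP => [[E /and3P [PE xE yE]]|y_x]; first by rewrite (def_pblock triv_P PE xE).
exists (pblock P x); rewrite y_x mem_pblock cover_P inE andbT.
by rewrite pblock_mem // cover_P inE.
Qed.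

Lemma same_block_refines P Q x y : refines Q P -> same_block Q x y -> same_block P x y.
Proof.
move=> /forall_inP QP /exists_inP [E QE /andP [xE yE]].
have /exists_inP [F PF /subsetP EF] := QP E QE.
by apply/exists_inP; exists F; rewrite ?EF.
Qed.

Lemma refines_refl P : refines P P.
Proof. by apply/forall_inP => E PE; apply/exists_inP; exists E. Qed.

Lemma refines_trans P Q R : refines Q P -> refines P R -> refines Q R.
Proof.
move=> /forall_inP QP /forall_inP PR; apply/forall_inP => E QE.
have /exists_inP [F PF EF] := QP E QE; have /exists_inP [F' RF' FF'] := PR F PF.
by apply/exists_inP; exists F'; rewrite ?(subset_trans EF FF').
Qed.

Lemma partition_eq P Q : is_partition P -> is_partition Q ->
  (forall x y, same_block P x y = same_block Q x y) -> P = Q.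
Proof.
move=> partP partQ PQ.
rewrite -(equivalence_partition_pblock partP) -(equivalence_partition_pblock partQ).
by apply: eq_imset => x; apply/setP => y; rewrite !inE -!same_blockE ?PQ.
Qed.

Definition block_pairs P := [set xy | same_block P xy.1 xy.2].

(* A strict refinement has strictly fewer pairs of elements in a common block. *)
Lemma refines_block_pairs_eq P Q : is_partition P -> is_partition Q -> refines Q P ->
  (#|block_pairs P| <= #|block_pairs Q|)%N -> Q = P.
Proof.
move=> partP partQ QP card_PQ.
have sub_QP : block_pairs Q \subset block_pairs P.
  by apply/subsetP => xy; rewrite !inE; apply: same_block_refines.
have /eqP eq_QP : block_pairs Q == block_pairs P.
  by rewrite eqEcard sub_QP card_PQ.
by apply: partition_eq => // x y; move/setP/(_ (x, y)): eq_QP; rewrite !inE.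
Qed.

Lemma is_origin_eq o x : is_origin o -> is_origin x = (x == o).
Proof.
case: o x => [i0 j0] [i j] /andP [/= /eqP i00 /eqP j00].
by rewrite /is_origin xpair_eqE -!val_eqE /= i00 j00.
Qed.

Lemma exists_origin_in o (E : {set 'I_m * 'I_n}) :
  is_origin o -> [exists x in E, is_origin x] = (o \in E).
Proof.
move=> o0; apply/exists_inP/idP => [[x xE]|oE]; last by exists o.
by rewrite (is_origin_eq _ o0) => /eqP <-.
Qed.

Lemma origin_in_subgrid P (R : {set 'I_m}) (C : {set 'I_n}) o :
  invariant_subgrid P R C -> is_origin o -> o \in setX R C.
Proof.
case: o => i0 j0 [/exists_inP [i Ri /eqP i_0] /exists_inP [j Cj /eqP j_0] _ _ _].
case/andP=> /eqP /= i0_0 /eqP /= j0_0.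
have -> : i0 = i by apply: val_inj; rewrite /= i0_0 i_0.
have -> : j0 = j by apply: val_inj; rewrite /= j0_0 j_0.
by rewrite inE /= Ri Cj.
Qed.

Section Realizability.
Variables (K : unitRingType) (r : 'I_m -> K) (s : 'I_n -> K).

Definition realizableb P := [forall E in P, \sum_(x in E) r x.1 * s x.2
                             == (if [exists x in E, is_origin x] then 1 else 0)].

Lemma realizableP P : reflect (realizable_with P r s) (realizableb P).
Proof. by apply: (iffP forall_inP) => realP E /realP /eqP. Qed.

Lemma realizable_sum_union_blocks P (D : {set 'I_m * 'I_n}) o :
  is_partition P -> realizable_with P r s -> is_origin o ->
  (forall x y, x \in D -> same_block P x y -> y \in D) ->
  \sum_(x in D) r x.1 * s x.2 = if o \in D then 1 else 0.
Proof.
move=> partP realP o0 closedD.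
have triv_P : trivIset P by case/and3P: partP.
have oP : o \in cover P by case/and3P: partP => /eqP -> _ _; rewrite inE.
have block_sum A : A \in P ->
    \sum_(x in A | x \in D) r x.1 * s x.2 = if (o \in A) && (o \in D) then 1 else 0.
  move=> PA; have [/exists_inP [x xA xD]|noAD] := boolP [exists x in A, x \in D].
    have AD y : y \in A -> y \in D.
      by move=> yA; apply: (closedD x) => //; apply/exists_inP; exists A; rewrite ?xA ?yA.
    rewrite (eq_bigl (fun y => y \in A)) => [|y]; last by apply/andb_idr/AD.
    by rewrite realP // (exists_origin_in _ o0) andb_idr //; apply: AD.
  rewrite big1 => [|y /andP [yA yD]]; last by case/exists_inP: noAD; exists y.
  by case: ifP => // /andP [oA oD]; case/exists_inP: noAD; exists o.
rewrite (eq_bigl (fun x => (x \in [set: _]) && (x \in D))) => [|x]; last by rewrite inE.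
rewrite (set_partition_big_cond _ partP) (eq_bigr _ block_sum).
have [oD|_] := boolP (o \in D); last by apply: big1 => A _; rewrite andbF.
rewrite (bigD1 (pblock P o)) ?pblock_mem // mem_pblock oP big1 /= ?addr0 // => A /andP [PA].
by rewrite andbT; case: ifP => // oA; rewrite (def_pblock triv_P PA oA) eqxx.
Qed.

Lemma finest_realizable_refinement P : is_partition P -> realizable_with P r s ->
  exists pi, [/\ is_partition pi, realizable_with pi r s, refines pi P &
    forall Q, is_partition Q -> realizable_with Q r s -> refines Q pi -> Q = pi].
Proof.
move=> partP /realizableP realP.
pose admissible Q := [&& is_partition Q, realizableb Q & refines Q P].
have admP : admissible P by rewrite /admissible partP realP refines_refl.
case: (arg_minnP (fun Q => #|block_pairs Q|) admP) => pi.
move=> /and3P [partpi /realizableP realpi piP] minpi.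
exists pi; split=> // Q partQ /realizableP realQ Qpi.
apply: refines_block_pairs_eq => //; apply: minpi.
by rewrite /admissible partQ realQ (refines_trans Qpi piP).
Qed.

End Realizability.
End GridPartitions.

Definition classic_eqb (T : Type) (x y : T) : bool :=
  if excluded_middle_informative (x = y) then true else false.

Lemma classic_eqbP (T : Type) (x y : T) : reflect (x = y) (classic_eqb x y).
Proof. by rewrite /classic_eqb; case: excluded_middle_informative => e; constructor. Qed.

Section InversePairs.
Variables (G : group) (K : unitRingType).

Definition product_coef m n (g : 'I_m -> G) (h : 'I_n -> G) (r : 'I_m -> K) (s : 'I_n -> K)
    (x : G) : K :=
  \sum_(i < m) \sum_(j < n | classic_eqb (gmul (g i) (h j)) x) r i * s j.

(* [a b = 1] in [K[G]] for [a := \sum_i r i g i] of rank [m] and [b := \sum_j s j h j] of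
   rank [n]; [product_coef g h r s x] is the coefficient of [x] in [a b]. *)
Definition inverse_pair m n (g : 'I_m -> G) (h : 'I_n -> G) (r : 'I_m -> K) (s : 'I_n -> K) :=
  [/\ injective g, injective h, (forall i, r i != 0), (forall j, s j != 0) &
      forall x, product_coef g h r s x = if classic_eqb x gone then 1 else 0].

Section Normalization.
Variables (m n : nat) (g : 'I_m -> G) (h : 'I_n -> G) (r : 'I_m -> K) (s : 'I_n -> K).
Hypothesis ghrs : inverse_pair g h r s.

Lemma inverse_pair_perm (sg : {perm 'I_m}) (sh : {perm 'I_n}) :
  inverse_pair (g \o sg) (h \o sh) (r \o sg) (s \o sh).
Proof.
have [g_inj h_inj r_nz s_nz coefE] := ghrs.
split=> [i i' /g_inj/perm_inj|j j' /h_inj/perm_inj|i|j|x] //; rewrite /= ?r_nz ?s_nz //.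
rewrite -coefE /product_coef [RHS](reindex_inj (@perm_inj _ sg)); apply: eq_bigr => i _.
by rewrite [RHS](reindex_inj (@perm_inj _ sh)).
Qed.

Lemma inverse_pair_unit_product : exists i j, gmul (g i) (h j) = gone.
Proof.
have [_ _ _ _ /(_ gone)] := ghrs; case: classic_eqbP => // _ coef1.
apply: NNPP => no_unit; move/eqP: coef1; rewrite /product_coef big1 => [|i _].
  by rewrite eq_sym oner_eq0.
apply: big_pred0 => j; apply/negbTE/classic_eqbP => unit_ij; by apply: no_unit; exists i, j.
Qed.

Lemma inverse_pair_normalize (o : 'I_m * 'I_n) :
  exists g' h' r' s', inverse_pair g' h' r' s' /\ gmul (g' o.1) (h' o.2) = gone.
Proof.
have [i [j gh1]] := inverse_pair_unit_product.
exists (g \o tperm o.1 i), (h \o tperm o.2 j), (r \o tperm o.1 i), (s \o tperm o.2 j).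
by split; [apply: inverse_pair_perm|rewrite /= !tpermL].
Qed.

End Normalization.
End InversePairs.

Lemma size_length (T : Type) (s : seq T) : size s = List.length s.
Proof. by elim: s => //= x s ->. Qed.

Lemma nth_List_nth (T : Type) (x0 : T) (s : seq T) i : nth x0 s i = List.nth i s x0.
Proof. by elim: s i => [|x s IHs] [|i] //=. Qed.

Section GroupRingElements.
Variables (G : group) (K : unitRingType) (f : G -> K) (sf : seq G) (k : nat).
Hypotheses (f_elem : gr_elem f sf) (size_sf : size sf = k).

Lemma gr_elem_nth_inj : injective (fun i : 'I_k => nth gone sf i).
Proof.
case: f_elem => uniq_sf _ i i'; rewrite !nth_List_nth => e; apply: ord_inj.
by apply: (proj1 (List.NoDup_nth sf gone) uniq_sf); rewrite // -size_length size_sf; apply/ltP.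
Qed.

Lemma gr_elem_nth_neq0 (i : 'I_k) : f (nth gone sf i) != 0.
Proof.
case: f_elem => _ ->; rewrite nth_List_nth; apply: List.nth_In.
by rewrite -size_length size_sf; apply/ltP.
Qed.

Lemma gr_elem_coefE x : f x = \sum_(i < k | classic_eqb (nth gone sf i) x) f (nth gone sf i).
Proof.
have [[i xi]|not_sf] := classic (exists i : 'I_k, nth gone sf i = x).
  rewrite (big_pred1 i) ?xi // => i'; apply/classic_eqbP/eqP => [|-> //].
  by rewrite -xi; apply: gr_elem_nth_inj.
rewrite big_pred0 => [|i]; last by apply/negbTE/classic_eqbP => xi; apply: not_sf; exists i.
apply/eqP; apply: contraT => /(proj2 f_elem _) /(List.In_nth _ _ gone) [i [lt_i ix]].
case: not_sf; have lt_ik : (i < k)%N by rewrite -size_sf size_length; apply/ltP.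
by exists (Ordinal lt_ik); rewrite nth_List_nth.
Qed.

End GroupRingElements.

Lemma gr_inverse_pair (G : group) (K : unitRingType) (fa : G -> K) (sa : seq G)
    (fb : G -> K) (sb : seq G) M N :
  gr_elem fa sa -> size sa = M -> gr_elem fb sb -> size sb = N -> gr_prod_is_one fa sa fb ->
  inverse_pair (fun i : 'I_M => nth gone sa i) (fun j : 'I_N => nth gone sb j)
    (fun i => fa (nth gone sa i)) (fun j => fb (nth gone sb j)).
Proof.
move=> a_elem size_sa b_elem size_sb [ab1 ab0].
split=> [||i|j|x]; [exact: gr_elem_nth_inj a_elem size_sa|exact: gr_elem_nth_inj b_elem size_sb|
  exact: (gr_elem_nth_neq0 a_elem size_sa i)|exact: (gr_elem_nth_neq0 b_elem size_sb j)|].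
transitivity (\sum_(y <- sa) fa y * fb (gmul (ginv y) x)); last first.
  by case: classic_eqbP => [->|/ab0].
rewrite (big_nth gone) size_sa big_mkord; apply: eq_bigr => i _.
rewrite -big_distrr /= [fb _](gr_elem_coefE b_elem size_sb); congr (_ * _); apply: eq_bigl => j.
by apply/classic_eqbP/classic_eqbP => [<-|->]; rewrite gmulA ?gmulVg ?gmulV gmul1g.
Qed.

Section MinimalCounterexample.
Variables (G : group) (K : unitRingType) (m n : nat).
Variables (g : 'I_m -> G) (h : 'I_n -> G) (r : 'I_m -> K) (s : 'I_n -> K).
Variable o : 'I_m * 'I_n.
Hypotheses (ghrs : inverse_pair g h r s) (o_origin : is_origin o).
Hypothesis gho : gmul (g o.1) (h o.2) = gone.

Local Notation gh x := (gmul (g x.1) (h x.2)).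

Lemma equal_value_equivalence :
  {in [set: 'I_m * 'I_n] & &, equivalence_rel (fun x y => classic_eqb (gh x) (gh y))}.
Proof.
move=> x y z _ _ _; split=> [|/classic_eqbP xy]; first exact/classic_eqbP.
by apply/classic_eqbP/classic_eqbP => <-.
Qed.

Definition value_partition :=
  equivalence_partition (fun x y => classic_eqb (gh x) (gh y)) [set: 'I_m * 'I_n].

Lemma value_partitionP : is_partition value_partition.
Proof. exact: equivalence_partitionP equal_value_equivalence. Qed.

Lemma same_block_value_partition x y : same_block value_partition x y -> gh x = gh y.
Proof.
rewrite same_blockE ?value_partitionP //.
by rewrite (pblock_equivalence_partition equal_value_equivalence) ?inE // => /classic_eqbP.
Qed.

Lemma realizable_value_partition : realizable_with value_partition r s.
Proof.
move=> _ /imsetP [w _ ->]; rewrite (exists_origin_in _ o_origin).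
have [_ _ _ _ /(_ (gh w))] := ghrs; rewrite /product_coef pair_big_dep /=.
move=> coefE; rewrite !inE /= gho -coefE.
by apply: eq_bigl => x; rewrite !inE; apply/classic_eqbP/classic_eqbP => ->.
Qed.

Section FinestRefinement.
Variable pi : {set {set 'I_m * 'I_n}}.
Hypotheses (pi_part : is_partition pi) (pi_real : realizable_with pi r s).
Hypothesis pi_value : refines pi value_partition.

Lemma same_block_value x y : same_block pi x y -> gh x = gh y.
Proof. by move/(same_block_refines pi_value)/same_block_value_partition. Qed.

(* The images of [a_i] and [b_j] under the homomorphism [Γ_π -> G]. *)
Definition a_in_G (i : 'I_m) := gmul (g i) (h o.2).
Definition b_in_G (j : 'I_n) := gmul (ginv (h o.2)) (h j).

Lemma pi_relations_in_G : pi_relations pi a_in_G b_in_G.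
Proof.
case/andP: o_origin => /eqP o1_0 /eqP o2_0.
split=> [i i_0|j j_0|x y /same_block_value xy].
- have -> : i = o.1 by apply: val_inj; rewrite i_0 o1_0.
  exact: gho.
- have -> : j = o.2 by apply: val_inj; rewrite j_0 o2_0.
  exact: gmulVg.
- by rewrite /a_in_G /b_in_G -!gmulA !(gmulA (h o.2)) !gmulV !gmul1g.
Qed.

Local Notation to_G := (pi_lift (P := pi) a_in_G b_in_G).

Lemma to_G_hom : group_hom to_G.
Proof. exact: pi_lift_hom pi_relations_in_G. Qed.

Lemma to_G_a i : to_G (pi_a pi i) = a_in_G i.
Proof. exact: (pi_lift_a pi_relations_in_G i). Qed.

Lemma to_G_b j : to_G (pi_b pi j) = b_in_G j.
Proof. exact: (pi_lift_b pi_relations_in_G j). Qed.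

Lemma a_in_G_inj : injective a_in_G.
Proof. by have [g_inj _ _ _ _] := ghrs; move=> i i' /gmulIr /g_inj. Qed.

Lemma b_in_G_inj : injective b_in_G.
Proof. by have [_ h_inj _ _ _] := ghrs; move=> j j' /gmulI /h_inj. Qed.

Lemma pi_nondegenerate : nondegenerate_gens (pi_a pi) (pi_b pi).
Proof.
split=> [i i' e|j j' e].
  by apply: a_in_G_inj; rewrite -!to_G_a e.
by apply: b_in_G_inj; rewrite -!to_G_b e.
Qed.

(* [N_tor(Γ_π)] lies in the kernel of [Γ_π -> G], and the generators stay distinct in [G]. *)
Lemma pi_gens_not_collapse : torsion_free G -> ~ gens_collapse_mod_Ntor (pi_a pi) (pi_b pi).
Proof.
move=> tfG; have to_G_eq := hom_Ntor_eq to_G_hom tfG.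
case=> [[i [i' [lt_ii' /to_G_eq]]]|[j [j' [lt_jj' /to_G_eq]]]].
  by rewrite !to_G_a => /a_in_G_inj ii'; rewrite ii' ltnn in lt_ii'.
by rewrite !to_G_b => /b_in_G_inj jj'; rewrite jj' ltnn in lt_jj'.
Qed.

Lemma inverse_pair_subgrid (R : {set 'I_m}) (C : {set 'I_n}) :
  invariant_subgrid pi R C ->
  inverse_pair (fun i : 'I_#|R| => g (enum_val i)) (fun j : 'I_#|C| => h (enum_val j))
    (fun i => r (enum_val i)) (fun j => s (enum_val j)).
Proof.
move=> RC; have [g_inj h_inj r_nz s_nz _] := ghrs.
split=> [i i' /g_inj/enum_val_inj|j j' /h_inj/enum_val_inj|i|j|x] //.
transitivity (\sum_(i in R) \sum_(j in C | classic_eqb (gmul (g i) (h j)) x) r i * s j).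
  rewrite /product_coef [RHS]big_enum_val; apply: eq_bigr => i _.
  by rewrite [RHS]big_enum_val_cond.
pose D := [set y in setX R C | classic_eqb (gh y) x].
rewrite pair_big_dep (eq_bigl (fun y => y \in D)) => [|[i j]]; last by rewrite !inE andbA.
have [_ _ _ _ RC_closed] := RC.
rewrite (realizable_sum_union_blocks pi_part pi_real o_origin) => [|y z].
  rewrite inE (origin_in_subgrid RC o_origin) gho.
  by congr (if _ then _ else _); apply/classic_eqbP/classic_eqbP => ->.
move=> /setIdP [yRC /classic_eqbP yx] yz; apply/setIdP; split; first exact: RC_closed yz.
by apply/classic_eqbP; rewrite -(same_block_value yz).
Qed.

End FinestRefinement.
End MinimalCounterexample.

Section Descent.
Variables (K : unitRingType) (M N : nat).
Hypothesis ulie_collapse : forall m n : nat, (2 <= m <= M)%N -> (2 <= n <= N)%N ->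
  forall P : {set {set 'I_m * 'I_n}}, is_partition P ->
  forall (Γ : group) (a : 'I_m -> Γ) (b : 'I_n -> Γ),
    presents P a b -> nondegenerate_gens a b ->
    minimally_realizable K P -> no_proper_invariant_subgrid P ->
    gens_collapse_mod_Ntor a b.
Variable G : group.
Hypothesis tfG : torsion_free G.

Lemma inverse_pair_descent m n (g : 'I_m -> G) (h : 'I_n -> G) (r : 'I_m -> K) (s : 'I_n -> K) :
  (2 <= m <= M)%N -> (2 <= n <= N)%N -> inverse_pair g h r s ->
  exists m' n' (g' : 'I_m' -> G) (h' : 'I_n' -> G) (r' : 'I_m' -> K) (s' : 'I_n' -> K),
    [/\ (2 <= m' <= m)%N, (2 <= n' <= n)%N, (m' + n' < m + n)%N & inverse_pair g' h' r' s'].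
Proof.
move=> /andP [m_ge2 m_le] /andP [n_ge2 n_le] ghrs.
pose o : 'I_m * 'I_n := (Ordinal (ltnW m_ge2), Ordinal (ltnW n_ge2)).
have o_origin : is_origin o by [].
have [g' [h' [r' [s' [ghrs' gho]]]]] := inverse_pair_normalize ghrs o.
have [pi [pi_part pi_real pi_value pi_finest]] := finest_realizable_refinement
  (value_partitionP g' h') (realizable_value_partition ghrs' o_origin gho).
have [[R [C [RC proper]]]|no_proper] :=
  classic (exists R C, invariant_subgrid pi R C /\ ((#|R| < m)%N \/ (#|C| < n)%N)).
  have [_ _ R_ge2 C_ge2 _] := RC.
  have R_le : (#|R| <= m)%N by rewrite -[m in (_ <= m)%N]card_ord max_card.
  have C_le : (#|C| <= n)%N by rewrite -[n in (_ <= n)%N]card_ord max_card.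
  have ghrs_RC := inverse_pair_subgrid ghrs' o_origin gho pi_part pi_real pi_value RC.
  exists #|R|, #|C|; do 4 eexists; split; [by rewrite R_ge2|by rewrite C_ge2| |exact: ghrs_RC].
  by case: proper; lia.
case: (pi_gens_not_collapse ghrs' o_origin gho pi_value tfG).
apply: (ulie_collapse _ _ pi_part (presents_pi_group pi)
  (pi_nondegenerate ghrs' o_origin gho pi_value)).
- by rewrite m_ge2.
- by rewrite n_ge2.
- by have [_ _ r_nz s_nz _] := ghrs'; exists r', s'; split.
- by move=> R C RC proper; apply: no_proper; exists R, C.
Qed.

Lemma no_inverse_pair m n (g : 'I_m -> G) (h : 'I_n -> G) (r : 'I_m -> K) (s : 'I_n -> K) :
  (2 <= m <= M)%N -> (2 <= n <= N)%N -> ~ inverse_pair g h r s.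
Proof.
have [k] := ubnP (m + n); elim: k m n g h r s => // k IHk m n g h r s.
move=> mn_lt m_range n_range ghrs.
have [m' [n' [g' [h' [r' [s' [m'_range n'_range mn'_lt ghrs']]]]]]] :=
  inverse_pair_descent m_range n_range ghrs.
by apply: (IHk m' n' g' h' r' s') => //; lia.
Qed.

End Descent.

Theorem theorem6p11 (K : unitRingType)
  (hK : forall x : K, x != 0 -> x \is a GRing.unit)
  (M N : nat) (hM : (2 <= M)%N) (hN : (2 <= N)%N)
  (H : forall m n : nat, (2 <= m <= M)%N -> (2 <= n <= N)%N ->
       forall P : {set {set 'I_m * 'I_n}}, is_partition P ->
       forall (Γ : group) (a : 'I_m -> Γ) (b : 'I_n -> Γ),
         presents P a b -> nondegenerate_gens a b ->
         minimally_realizable K P -> no_proper_invariant_subgrid P ->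
         gens_collapse_mod_Ntor a b) :
  forall G : group, torsion_free G ->
    ~ exists (fa : G -> K) (sa : seq G) (fb : G -> K) (sb : seq G),
        [/\ gr_elem fa sa, size sa = M, gr_elem fb sb, size sb = N &
            gr_prod_is_one fa sa fb].
Proof.
move=> G tfG [fa [sa [fb [sb [a_elem size_sa b_elem size_sb ab1]]]]].
apply: (no_inverse_pair H tfG _ _ (gr_inverse_pair a_elem size_sa b_elem size_sb ab1)).
  by rewrite hM leqnn.
by rewrite hN leqnn.
Qed.
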